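(* If $x\in\mathrm{Sort}_n(132,321)$, then $x$ avoids the bivincular pattern $132^{\star}$.
   Context: An occurrence of the bivincular pattern $132^{\star}$ in $x=x_1\cdots x_n$ is a triple of indices $a<b$, $b+1\le n$ with $x_a<x_{b+1}$ and $x_b=x_{b+1}+1$ (so $x_ax_bx_{b+1}$ is an occurrence of $132$ whose last two entries are adjacent in position and consecutive in value). A permutation contains a classical pattern $p$ if it has a subsequence order-isomorphic to $p$. For a set $T$ of patterns, the map $s_T$ is defined as follows: the entries of the input permutation are read from left to right, with an initially empty stack. At each step, if the input is nonempty and pushing the next input entry onto the stack produces a stack whose contents, read from top to bottom, avoid every pattern in $T$, that entry is pushed; otherwise the top entry of the stack is popped and appended to the output. When the input is exhausted, the remaining stack entries are popped one at a time to the output. Write $s_{\sigma,\tau}=s_{\{\sigma,\tau\}}$ and $s=s_{\{21\}}$ (West's stack-sorting map). $\mathrm{Sort}_n(\sigma,\tau)$ is the set of $x\in S_n$ with $s(s_{\sigma,\tau}(x))=12\cdots n$. *)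

From mathcomp Require Import all_boot.
Set Implicit Arguments. Unset Strict Implicit. Unset Printing Implicit Defensive.

Definition is_perm (n : nat) (x : seq nat) : bool := perm_eq x (iota 1 n).

Definition order_iso (s p : seq nat) : bool :=
  (size s == size p) &&
  all (fun i => all (fun j =>
     (nth 0 s i < nth 0 s j) == (nth 0 p i < nth 0 p j)) (iota 0 (size s)))
    (iota 0 (size s)).

Fixpoint bitseqs (k : nat) : seq bitseq :=
  if k is k'.+1 then [seq b :: m | b <- [:: true; false], m <- bitseqs k']
  else [:: [::]].

Definition contains (s p : seq nat) : bool :=
  has (fun m => order_iso (mask m s) p) (bitseqs (size s)).

Definition avoids_all (T : seq (seq nat)) (s : seq nat) : bool :=
  all (fun p => ~~ contains s p) T.

(* One run of the pattern-avoiding stack map s_T.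
   State: input (remaining), stack (head = top), output (reversed accumulator).
   Each iteration either pushes or pops; the fuel bound 2*n+1 suffices. *)
Fixpoint stack_run (T : seq (seq nat)) (fuel : nat)
    (inp stk out : seq nat) : seq nat :=
  match fuel with
  | 0 => rev out
  | f.+1 =>
    match inp with
    | a :: inp' =>
        if avoids_all T (a :: stk) then stack_run T f inp' (a :: stk) out
        else match stk with
             | b :: stk' => stack_run T f inp stk' (b :: out)
             | [::] => stack_run T f inp' [:: a] out (* unreachable for nonempty T-patterns of size >= 2 *)
             end
    | [::] =>
        match stk with
        | b :: stk' => stack_run T f [::] stk' (b :: out)
        | [::] => rev out
        end
    end
  end.

Definition stack_map (T : seq (seq nat)) (x : seq nat) : seq nat :=
  stack_run T (size x).*2.+1 x [::] [::].

Definition west (x : seq nat) : seq nat := stack_map [:: [:: 2; 1]] x.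

Definition Sort (n : nat) (sigma tau : seq nat) : pred (seq nat) :=
  fun x => is_perm n x && (west (stack_map [:: sigma; tau] x) == iota 1 n).

(* occurrence of the bivincular pattern 132* : indices a < b, b+1 < size x
   (0-based), with x_a < x_{b+1} and x_b = x_{b+1} + 1 *)
Definition contains_132star (x : seq nat) : Prop :=
  exists a b : nat, [/\ a < b, b.+1 < size x,
     nth 0 x a < nth 0 x b.+1 & nth 0 x b = (nth 0 x b.+1).+1].

From mathcomp Require Import all_boot zify.
Set Implicit Arguments. Unset Strict Implicit. Unset Printing Implicit Defensive.

(* Write x = x1 (p+1) p x3 with some v < p in x1.  The (132,321)-avoiding stack
   pops an element only when an element not larger than it lies below it, so
   once v has been read the stack always holds some r <= v < p.  When p+1
   arrives, such an r stays below it, and p is then pushed right on top of p+1;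
   hence y = s_{132,321}(x) lists p, then p+1, then r.  This 231 is never
   undone by West's map: in its increasing stack everything above p is smaller
   than p+1, so the arrival of p+1 pops p before r is even read.  Thus s(y)
   has p before r < p and is not the identity. *)

Lemma containsP s p : reflect (exists2 t, subseq t s & order_iso t p) (contains s p).
Proof.
apply: (iffP hasP) => [[m _ iso_m] | [t /subseqP [m size_m ->] iso_t]].
  by exists (mask m s) => //; apply: mask_subseq.
exists m => //; elim: m (size s) size_m {iso_t} => [|b m IHm] [|k] //= [/IHm m_k].
by rewrite !mem_cat; case: b; rewrite (map_f _ m_k) ?orbT.
Qed.

Lemma order_iso_size t p : order_iso t p -> size t = size p.
Proof. by case/andP => /eqP. Qed.

Lemma avoids_all_subseq T s t : subseq s t -> avoids_all T t -> avoids_all T s.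
Proof.
move=> sub_st /allP avoid_t; apply/allP => p /avoid_t; apply: contra.
by case/containsP => r sub_rs iso_r; apply/containsP; exists r => //; apply: subseq_trans sub_st.
Qed.

Lemma avoids_all_seq1 T a : all (fun p => 1 < size p) T -> avoids_all T [:: a].
Proof.
move/allP => long_T; apply/allP => p /long_T long_p.
apply/negP => /containsP [t /size_subseq /= short_t /order_iso_size]; lia.
Qed.

Lemma order_iso21 u v : order_iso [:: u; v] [:: 2; 1] = (v < u).
Proof. by rewrite /order_iso /= !ltnn; case: ltngtP. Qed.

Lemma order_iso132 u v w : order_iso [:: u; v; w] [:: 1; 3; 2] = (u < w < v).
Proof.
rewrite /order_iso /= !ltnn.
by case: (ltngtP u v); case: (ltngtP u w); case: (ltngtP v w) => //= *; lia.
Qed.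

Lemma order_iso321 u v w : order_iso [:: u; v; w] [:: 3; 2; 1] = (w < v < u).
Proof.
rewrite /order_iso /= !ltnn.
by case: (ltngtP u v); case: (ltngtP u w); case: (ltngtP v w) => //= *; lia.
Qed.

Lemma sorted_cat_rel (T : eqType) (r : rel T) s1 s2 x y :
  transitive r -> sorted r (s1 ++ s2) -> x \in s1 -> y \in s2 -> r x y.
Proof.
by move=> r_trans; rewrite sorted_pairwise // pairwise_cat => /and3P [/allrelP r12 _ _]; apply: r12.
Qed.

Section StackRun.

Variable T : seq (seq nat).

Lemma stack_run_out f inp stk out :
  stack_run T f inp stk out = rev out ++ stack_run T f inp stk [::].
Proof.
elim: f inp stk out => [|f IHf] [|a inp] [|b stk] out //=; rewrite ?cats0 //.
- by rewrite IHf [in RHS]IHf rev_cons cat_rcons.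
- by case: ifP.
- by case: ifP => _; rewrite IHf [in RHS]IHf // rev_cons cat_rcons.
Qed.

(* The fuel [2 * size inp + size stk + 1] of [stack_map] is exactly consumed:
   every push and every pop lowers this measure by one. *)
Definition run inp stk := stack_run T (2 * size inp + size stk).+1 inp stk [::].

Lemma stack_mapE x : stack_map T x = run x [::].
Proof. by rewrite /stack_map /run addn0 mul2n. Qed.

Lemma run_nil stk : run [::] stk = stk.
Proof.
rewrite /run; elim: stk => [|b stk IHstk] //.
change (stack_run T (2 * size (@nil nat) + size stk).+1 [::] stk [:: b] = b :: stk).
by rewrite stack_run_out IHstk.
Qed.

Lemma run_push a inp stk :
  avoids_all T (a :: stk) -> run (a :: inp) stk = run inp (a :: stk).
Proof.
move=> avoid_a; rewrite /run.
have -> : 2 * size (a :: inp) + size stk = (2 * size inp + size (a :: stk)).+1.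
  by rewrite /=; lia.
by move: (2 * _ + _).+1 => f /=; rewrite avoid_a.
Qed.

Lemma run_pop a b inp stk :
  ~~ avoids_all T [:: a, b & stk] -> run (a :: inp) (b :: stk) = b :: run (a :: inp) stk.
Proof.
move=> /negbTE block_a; rewrite /run.
have -> : 2 * size (a :: inp) + size (b :: stk) = (2 * size (a :: inp) + size stk).+1.
  by rewrite /=; lia.
by move: (2 * _ + _).+1 => f /=; rewrite block_a stack_run_out.
Qed.

Hypothesis avoids_seq1 : forall a, avoids_all T [:: a].

Lemma run_ind (Q : seq nat -> seq nat -> seq nat -> Prop) :
  (forall stk, Q [::] stk stk) ->
  (forall a inp stk, avoids_all T (a :: stk) ->
     Q inp (a :: stk) (run inp (a :: stk)) -> Q (a :: inp) stk (run inp (a :: stk))) ->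
  (forall a b inp stk, ~~ avoids_all T [:: a, b & stk] ->
     Q (a :: inp) stk (run (a :: inp) stk) -> Q (a :: inp) (b :: stk) (b :: run (a :: inp) stk)) ->
  forall inp stk, Q inp stk (run inp stk).
Proof.
move=> Qnil Qpush Qpop; elim=> [|a inp IHinp] stk; first by rewrite run_nil.
elim: stk => [|b stk IHstk]; first by rewrite run_push //; apply: Qpush.
have [avoid_a | block_a] := boolP (avoids_all T [:: a, b & stk]).
  by rewrite run_push //; apply: Qpush.
by rewrite run_pop //; apply: Qpop.
Qed.

Lemma perm_run inp stk : perm_eq (run inp stk) (inp ++ stk).
Proof.
elim/run_ind: inp stk / (run inp stk) => // [a inp stk _ | a b inp stk _].
  by move/permPl => ->; rewrite (perm_catCA inp [:: a] stk).
rewrite -(perm_cons b) => /permPl ->.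
by rewrite perm_sym (perm_catCA (a :: inp) [:: b] stk).
Qed.

Lemma run_split_stack inp s1 e s2 :
  exists u w, [/\ run inp (s1 ++ e :: s2) = u ++ e :: w, {subset s1 <= u} & {subset s2 <= w}].
Proof.
move Estk : (s1 ++ e :: s2) => stk; elim/run_ind: inp stk / (run inp stk) s1 Estk.
- by move=> stk s1 <-; exists s1, s2; split.
- move=> a inp stk _ IH s1 Estk.
  have [u [w [-> s1u s2w]]] := IH (a :: s1) (congr1 (cons a) Estk).
  by exists u, w; split=> // z z_s1; apply: s1u; rewrite inE z_s1 orbT.
- move=> a b inp stk _ IH [|c s1] /= [<- Estk].
    exists [::], (run (a :: inp) stk); split=> // z z_s2.
    by rewrite (perm_mem (perm_run _ _)) -Estk mem_cat z_s2 orbT.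
  have [u [w [-> s1u s2w]]] := IH s1 Estk.
  by exists (c :: u), w; split=> // z; rewrite !inE => /orP [-> // | /s1u ->]; rewrite orbT.
Qed.

Definition pop_stable (P : pred (seq nat)) :=
  forall a b s, avoids_all T (b :: s) -> ~~ avoids_all T [:: a, b & s] -> P (b :: s) -> P s.

Lemma pop_stable_notin x : pop_stable (fun s => x \notin s).
Proof. by move=> a b s _ _; rewrite inE negb_or => /andP []. Qed.

Lemma pop_stableI P Q : pop_stable P -> pop_stable Q -> pop_stable (predI P Q).
Proof.
move=> P_pop Q_pop a b s avoid block /andP [Pbs Qbs].
by apply/andP; split; [apply: P_pop block Pbs | apply: Q_pop block Qbs].
Qed.

Lemma run_read (P : pred (seq nat)) a inp stk :
  pop_stable P -> avoids_all T stk -> P stk ->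
  exists s0 stk1, [/\ stk = s0 ++ stk1, run (a :: inp) stk = s0 ++ run inp (a :: stk1),
                      avoids_all T (a :: stk1) & P stk1].
Proof.
move=> P_pop; elim: stk => [|b stk IHstk] avoid_stk P_stk.
  by exists [::], [::]; rewrite run_push.
have [avoid_a | block_a] := boolP (avoids_all T [:: a, b & stk]).
  by exists [::], (b :: stk); rewrite run_push.
have avoid_stk' : avoids_all T stk by apply: avoids_all_subseq avoid_stk; apply: subseq_cons.
have [s0 [stk1 [Estk Erun avoid_a P_stk1]]] :=
  IHstk avoid_stk' (P_pop _ _ _ avoid_stk block_a P_stk).
by exists (b :: s0), stk1; rewrite run_pop // Erun Estk.
Qed.

Lemma run_cat (P : pred (seq nat)) u w stk :
  pop_stable P -> (forall a s, a \in u -> P s -> P (a :: s)) ->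
  avoids_all T stk -> P stk ->
  exists o stk', [/\ run (u ++ w) stk = o ++ run w stk', {subset u ++ stk <= o ++ stk'},
                     avoids_all T stk' & P stk'].
Proof.
move=> P_pop; elim: u stk => [|a u IHu] stk P_push avoid_stk P_stk.
  by exists [::], stk; split.
have [s0 [stk1 [Estk -> avoid_a P_stk1]]] := run_read a (u ++ w) P_pop avoid_stk P_stk.
have P_push' a' s : a' \in u -> P s -> P (a' :: s).
  by move=> a'_u; apply: P_push; rewrite inE a'_u orbT.
have [o [stk' [-> sub_o avoid' P']]] := IHu _ P_push' avoid_a (P_push _ _ (mem_head a u) P_stk1).
exists (s0 ++ o), stk'; split=> //; first by rewrite catA.
move=> z z_in; have [z_s0 | z_s0] := boolP (z \in s0); first by rewrite !mem_cat z_s0.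
rewrite -catA mem_cat sub_o ?orbT //.
by move: z_in; rewrite Estk !(mem_cat, inE) (negbTE z_s0) -orbA orbCA.
Qed.

End StackRun.

Local Notation pats132_321 := [:: [:: 1; 3; 2]; [:: 3; 2; 1]].
Local Notation pats21 := [:: [:: 2; 1]].

Lemma avoids132_321P s :
  reflect (forall u v w, subseq [:: u; v; w] s -> ~~ (u < w < v) && ~~ (w < v < u))
          (avoids_all pats132_321 s).
Proof.
rewrite /avoids_all /= andbT; apply: (iffP andP) => [[no132 no321] u v w sub_s | no_occ].
  apply/andP; split; [apply: contra no132 | apply: contra no321] => occ;
    by apply/containsP; exists [:: u; v; w]; rewrite ?order_iso132 ?order_iso321.
split; apply/containsP => -[[|u [|v [|w [|? ?]]]] sub_s] //.
  by rewrite order_iso132; have /andP [/negPf -> _] := no_occ u v w sub_s.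
by rewrite order_iso321; have /andP [_ /negPf ->] := no_occ u v w sub_s.
Qed.

Lemma pats132_321_pop a b s :
  avoids_all pats132_321 (b :: s) -> ~~ avoids_all pats132_321 [:: a, b & s] ->
  has (leq^~ b) s.
Proof.
move=> /avoids132_321P avoid_bs; apply: contraR => /hasPn above_b.
apply/avoids132_321P => u v w /=.
case: eqP => [-> | _]; last exact: avoid_bs.
case: eqP => [-> | _] sub_s.
  by have := above_b w; rewrite -sub1seq => /(_ sub_s); lia.
have w_s : w \in s by rewrite (mem_subseq sub_s) // !inE eqxx orbT.
have := above_b w w_s; have := avoid_bs b v w; rewrite /= eqxx => /(_ sub_s); lia.
Qed.

Lemma pats132_321_push p s :
  avoids_all pats132_321 (p.+1 :: s) -> p.+1 \notin s ->
  avoids_all pats132_321 [:: p, p.+1 & s].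
Proof.
move=> /avoids132_321P avoid_s fresh; apply/avoids132_321P => u v w /=.
case: eqP => [-> | _]; last exact: avoid_s.
case: eqP => [-> _ | _ sub_s]; first lia.
have : w != p.+1 by apply: contraNneq fresh => <-; rewrite (mem_subseq sub_s) // !inE eqxx orbT.
have := avoid_s p.+1 v w; rewrite /= eqxx => /(_ sub_s); lia.
Qed.

Lemma pop_stable_has_leq v : pop_stable pats132_321 (fun s => has (leq^~ v) s).
Proof.
move=> a b s avoid block /= /orP [b_v | //].
by have /hasP [w w_s w_b] := pats132_321_pop avoid block; apply/hasP; exists w => //; lia.
Qed.

Lemma avoids132_321_seq1 a : avoids_all pats132_321 [:: a].
Proof. exact: avoids_all_seq1. Qed.

Lemma run132_321_read_pair x1 w p v : p.+1 \notin x1 -> v \in x1 -> v < p ->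
  exists o stk r, [/\ run pats132_321 (x1 ++ p.+1 :: w) [::] = o ++ run pats132_321 w (p.+1 :: stk),
    avoids_all pats132_321 (p.+1 :: stk), p.+1 \notin stk, r \in stk & r < p].
Proof.
move=> fresh v_x1 v_lt.
have x1_neq a : a \in x1 -> a != p.+1 by apply: contraTneq => ->.
case/splitPr: v_x1 x1_neq => u1 u2 x1_neq; rewrite -catA cat_cons.
set fresh_stk := fun s : seq nat => p.+1 \notin s.
set bounded_stk := predI fresh_stk (fun s => has (leq^~ v) s).
have fresh_pop : pop_stable pats132_321 fresh_stk by apply: pop_stable_notin.
have bounded_pop : pop_stable pats132_321 bounded_stk.
  by apply: pop_stableI => //; apply: pop_stable_has_leq.
have fresh_push a s : a \in u1 ++ v :: u2 -> fresh_stk s -> fresh_stk (a :: s).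
  by move=> /x1_neq a_neq fresh_s; rewrite /fresh_stk inE negb_or eq_sym a_neq.
have u1_push a s : a \in u1 -> fresh_stk s -> fresh_stk (a :: s).
  by move=> a_u1; apply: fresh_push; rewrite mem_cat a_u1.
have [o1 [stk1 [-> _ avoid1 fresh1]]] :=
  run_cat (stk := [::]) avoids132_321_seq1 (v :: u2 ++ p.+1 :: w) fresh_pop u1_push isT isT.
have [s0 [stk2 [_ -> avoid2 fresh2]]] :=
  run_read avoids132_321_seq1 v (u2 ++ p.+1 :: w) fresh_pop avoid1 fresh1.
have bounded2 : bounded_stk (v :: stk2).
  by rewrite /= leqnn andbT; apply: fresh_push fresh2; rewrite mem_cat mem_head orbT.
have bounded_push a s : a \in u2 -> bounded_stk s -> bounded_stk (a :: s).
  move=> a_u2 /andP [fresh_s le_s]; rewrite /= le_s orbT andbT.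
  by apply: fresh_push fresh_s; rewrite mem_cat inE a_u2 !orbT.
have [o3 [stk3 [-> _ avoid3 bounded3]]] :=
  run_cat avoids132_321_seq1 (p.+1 :: w) bounded_pop bounded_push avoid2 bounded2.
have [s0' [stk4 [_ -> avoid4 /andP [fresh4 /hasP [r r_stk4 r_v]]]]] :=
  run_read avoids132_321_seq1 p.+1 w bounded_pop avoid3 bounded3.
by exists (o1 ++ s0 ++ o3 ++ s0'), stk4, r; split=> //; [rewrite -!catA | lia].
Qed.

Lemma stack_map132_321_231 x1 p x3 v : p.+1 \notin x1 -> v \in x1 -> v < p ->
  exists U W r, [/\ stack_map pats132_321 (x1 ++ [:: p.+1, p & x3]) = U ++ p.+1 :: W,
                    p \in U, r \in W & r < p].
Proof.
move=> fresh v_x1 v_lt; rewrite stack_mapE.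
have [o [stk [r [-> avoid fresh_stk r_stk r_lt]]]] :=
  run132_321_read_pair (p :: x3) fresh v_x1 v_lt.
rewrite run_push; last exact: pats132_321_push.
have [u [w [-> p_u stk_w]]] := run_split_stack avoids132_321_seq1 x3 [:: p] p.+1 stk.
by exists (o ++ u), w, r; rewrite -catA mem_cat p_u ?mem_head ?orbT ?stk_w.
Qed.

Lemma west_231 U c W b a : b \in U -> a \in W -> b < c ->
  exists A B, [/\ west (U ++ c :: W) = A ++ B, b \in A & a \in B].
Proof.
have avoid1 x : avoids_all pats21 [:: x] by apply: avoids_all_seq1.
have pop_true : pop_stable pats21 predT by [].
move=> b_U a_W b_c; rewrite /west stack_mapE.
have [o [stk [-> sub_o avoid _]]] :=
  run_cat (u := U) (stk := [::]) avoid1 (c :: W) pop_true (fun _ _ _ _ => isT) isT isT.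
have [s0 [stk1 [Estk -> avoid_c _]]] := run_read avoid1 c W pop_true avoid isT.
exists (o ++ s0), (run pats21 W (c :: stk1)); split; first by rewrite catA.
  have b_stk1 : b \notin stk1.
    apply: contraL avoid_c => b_stk1; rewrite /avoids_all /= andbT negbK.
    by apply/containsP; exists [:: c; b]; rewrite ?order_iso21 //= eqxx sub1seq.
  have /sub_o : b \in U ++ [::] by rewrite cats0.
  by rewrite Estk catA mem_cat (negbTE b_stk1) orbF.
by rewrite (perm_mem (perm_run avoid1 _ _)) mem_cat a_W.
Qed.

Lemma contains_132star_split x : contains_132star x ->
  exists x1 p x3 v, [/\ x = x1 ++ [:: p.+1, p & x3], v \in x1 & v < p].
Proof.
move=> [a [b [a_b b_size lt_a eq_b]]].
exists (take b x), (nth 0 x b.+1), (drop b.+2 x), (nth 0 x a); split=> //.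
- by rewrite -eq_b -(drop_nth 0 b_size) -(drop_nth 0 (ltnW b_size)) cat_take_drop.
- by rewrite -(nth_take 0 a_b) mem_nth // size_takel // ltnW // ltnW.
Qed.

Theorem proposition3p3 (n : nat) (x : seq nat) :
  x \in Sort n [:: 1; 3; 2] [:: 3; 2; 1] -> ~ contains_132star x.
Proof.
rewrite unfold_in => /andP [x_perm /eqP sorted_out].
move=> /contains_132star_split [x1 [p [x3 [v [Ex v_x1 v_lt]]]]].
have fresh : p.+1 \notin x1.
  have := perm_uniq x_perm; rewrite iota_uniq Ex cat_uniq => /and3P [_ + _].
  by apply: contra => p_x1; apply/hasP; exists p.+1; rewrite ?mem_head.
have [U [W [r [Ey p_U r_W r_lt]]]] := stack_map132_321_231 x3 fresh v_x1 v_lt.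
have [A [B [Ew p_A r_B]]] := west_231 p_U r_W (ltnSn p).
have := sorted_cat_rel ltn_trans _ p_A r_B; rewrite -Ew -Ey -Ex sorted_out.
by move=> /(_ (iota_ltn_sorted 1 n)); lia.
Qed.
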